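(* Let $(J,[\cdot,\cdot],\alpha)$ be a Hom-Jacobi-Jordan algebra, $(V,\rho,\beta)$ a representation of $J$ on $V$ with respect to $\beta$, and let $\theta,\theta'$ be $2$-cocycles of $J$ with coefficients in $V$ which are equivalent, i.e. $\theta'-\theta\in B^2_{\alpha,\beta}(J,V)$. Then the extensions $(J\oplus V,[\cdot,\cdot]_{\theta},\alpha+\beta)$ and $(J\oplus V,[\cdot,\cdot]_{\theta'},\alpha+\beta)$ are equivalent: there is an isomorphism of Hom-Jacobi-Jordan algebras $\Phi\colon(J\oplus V,[\cdot,\cdot]_{\theta},\alpha+\beta)\to(J\oplus V,[\cdot,\cdot]_{\theta'},\alpha+\beta)$ with $\Phi\circ i_0=i_0$ and $\pi_0\circ\Phi=\pi_0$.
   Context: A Hom-Jacobi-Jordan algebra is a triple $(J,[\cdot,\cdot],\alpha)$ with $J$ a vector space, $[\cdot,\cdot]$ symmetric bilinear and $\alpha$ linear, satisfying $[\alpha(x),[y,z]]+[\alpha(y),[z,x]]+[\alpha(z),[x,y]]=0$. An isomorphism of Hom-Jacobi-Jordan algebras is a bijective linear map $\phi$ with $\phi\circ\alpha=\alpha'\circ\phi$ and $\phi([x,y])=[\phi(x),\phi(y)]'$. A representation of $J$ on $V$ with respect to $\beta\in\mathrm{End}(V)$ is a linear $\rho\colon J\to\mathrm{End}(V)$ with $\rho(\alpha(x))\circ\beta=\beta\circ\rho(x)$ and $\rho([x,y])\circ\beta=-\rho(\alpha(x))\rho(y)-\rho(\alpha(y))\rho(x)$. $C^2_{\alpha,\beta}(J,V)$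 is the set of symmetric bilinear $g\colon J\times J\to V$ with $\beta(g(x,y))=g(\alpha(x),\alpha(y))$; a $2$-cocycle is $g\in C^2_{\alpha,\beta}(J,V)$ with $g(\alpha(x),[y,z])+g(\alpha(y),[x,z])+g(\alpha(z),[x,y])+\rho(\alpha(x))g(y,z)+\rho(\alpha(y))g(x,z)+\rho(\alpha(z))g(x,y)=0$ for all $x,y,z$. $B^2_{\alpha,\beta}(J,V)$ is the set of maps $d^1f(x,y)=f([x,y])-\rho(x)f(y)-\rho(y)f(x)$ with $f\colon J\to V$ linear and $f\circ\alpha=\beta\circ f$. For a $2$-cocycle $\theta$, $J\oplus V$ carries the bracket $[x+v,y+w]_\theta=[x,y]+\rho(x)w+\rho(y)v+\theta(x,y)$ and the map $(\alpha+\beta)(x+v)=\alpha(x)+\beta(v)$; $i_0(v)=v$ and $\pi_0(x+v)=x$. *)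

From HB Require Import structures.
From mathcomp Require Import all_boot all_order all_algebra.
Set Implicit Arguments. Unset Strict Implicit. Unset Printing Implicit Defensive.
Import GRing.Theory.
Local Open Scope ring_scope.

Section HomJJ.
Variable K : fieldType.

Definition lin (U W : lmodType K) (f : U -> W) : Prop :=
  forall (a : K) (x y : U), f (a *: x + y) = a *: f x + f y.

Definition bilin (U W : lmodType K) (g : U -> U -> W) : Prop :=
  (forall y, lin (fun x => g x y)) /\ (forall x, lin (g x)).

Definition symmetric_bilin (U W : lmodType K) (g : U -> U -> W) : Prop :=
  bilin g /\ forall x y, g x y = g y x.

Definition HomJJ (J : lmodType K) (br : J -> J -> J) (alpha : J -> J) : Prop :=
  [/\ symmetric_bilin br, lin alpha &
   forall x y z, br (alpha x) (br y z) + br (alpha y) (br z x)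
                 + br (alpha z) (br x y) = 0].

Definition HomJJ_iso (J J' : lmodType K) (br : J -> J -> J) (alpha : J -> J)
  (br' : J' -> J' -> J') (alpha' : J' -> J') (phi : J -> J') : Prop :=
  [/\ lin phi, bijective phi,
      (forall x, phi (alpha x) = alpha' (phi x)) &
      (forall x y, phi (br x y) = br' (phi x) (phi y))].

Definition is_rep (J V : lmodType K) (br : J -> J -> J) (alpha : J -> J)
  (rho : J -> V -> V) (beta : V -> V) : Prop :=
  [/\ lin beta, forall x, lin (rho x),
      (forall (a : K) x y v, rho (a *: x + y) v = a *: rho x v + rho y v),
      (forall x v, rho (alpha x) (beta v) = beta (rho x v)) &
      (forall x y v, rho (br x y) (beta v)
                     = - rho (alpha x) (rho y v) - rho (alpha y) (rho x v))].

Definition C2 (J V : lmodType K) (alpha : J -> J) (beta : V -> V)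
  (g : J -> J -> V) : Prop :=
  symmetric_bilin g /\ forall x y, beta (g x y) = g (alpha x) (alpha y).

Definition cocycle2 (J V : lmodType K) (br : J -> J -> J) (alpha : J -> J)
  (rho : J -> V -> V) (beta : V -> V) (g : J -> J -> V) : Prop :=
  C2 alpha beta g /\
  forall x y z,
    g (alpha x) (br y z) + g (alpha y) (br x z) + g (alpha z) (br x y)
    + rho (alpha x) (g y z) + rho (alpha y) (g x z) + rho (alpha z) (g x y) = 0.

Definition d1 (J V : lmodType K) (br : J -> J -> J) (rho : J -> V -> V)
  (f : J -> V) : J -> J -> V :=
  fun x y => f (br x y) - rho x (f y) - rho y (f x).

Definition coboundary2 (J V : lmodType K) (br : J -> J -> J) (alpha : J -> J)
  (rho : J -> V -> V) (beta : V -> V) (g : J -> J -> V) : Prop :=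
  exists f : J -> V, [/\ lin f, (forall x, f (alpha x) = beta (f x)) &
                      forall x y, g x y = d1 br rho f x y].

(* J ⊕ V modelled as the product lmodType J * V *)
Definition ext_br (J V : lmodType K) (br : J -> J -> J) (rho : J -> V -> V)
  (theta : J -> J -> V) (p q : J * V) : J * V :=
  (br p.1 q.1, rho p.1 q.2 + rho q.1 p.2 + theta p.1 q.1).

Definition ext_alpha (J V : lmodType K) (alpha : J -> J) (beta : V -> V)
  (p : J * V) : J * V := (alpha p.1, beta p.2).

Definition i0 (J V : lmodType K) (v : V) : J * V := (0, v).
Definition pi0 (J V : lmodType K) (p : J * V) : J := p.1.

End HomJJ.

(* If theta' - theta = d^1 f, the shear (x, v) |-> (x, v + f x) is the
   isomorphism: the terms -rho x (f y) - rho y (f x) of d^1 f cancel the cross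
   terms created by the shift, and f (br x y) is the shift of the bracket
   itself. *)
From HB Require Import structures.
From mathcomp Require Import all_boot all_order all_algebra.
Set Implicit Arguments. Unset Strict Implicit. Unset Printing Implicit Defensive.
Import GRing.Theory.
Local Open Scope ring_scope.

Section Linear.
Variables (K : fieldType) (U W : lmodType K) (g : U -> W).
Hypothesis g_lin : lin g.

Lemma lin_add x y : g (x + y) = g x + g y.
Proof. by rewrite -[x in LHS]scale1r g_lin scale1r. Qed.

Lemma lin0 : g 0 = 0.
Proof. by apply: (@addrI _ (g 0)); rewrite -lin_add !addr0. Qed.

End Linear.

Section Shear.
Variables (K : fieldType) (J V : lmodType K) (f : J -> V).

Definition shear (p : J * V) : J * V := (p.1, p.2 + f p.1).

Lemma shear_bij : bijective shear.
Proof.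
by exists (fun p => (p.1, p.2 - f p.1)) => [[x v]|[x v]];
  rewrite /shear /= ?addrK ?subrK.
Qed.

Lemma shear_lin : lin f -> lin shear.
Proof.
move=> f_lin a [x v] [y w]; rewrite /shear /= f_lin.
by congr (_, _); rewrite /= scalerDr addrACA.
Qed.

Lemma shear_i0 v : lin f -> shear (i0 J v) = i0 J v.
Proof. by move=> f_lin; rewrite /shear /= (lin0 f_lin) addr0. Qed.

Lemma shear_ext_alpha (alpha : J -> J) (beta : V -> V) p :
  lin beta -> (forall x, f (alpha x) = beta (f x)) ->
  shear (ext_alpha alpha beta p) = ext_alpha alpha beta (shear p).
Proof.
move=> beta_lin f_alpha.
by rewrite /shear /ext_alpha /= f_alpha (lin_add beta_lin).
Qed.

Lemma shear_ext_br (br : J -> J -> J) (rho : J -> V -> V)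
    (theta theta' : J -> J -> V) p q :
  (forall x, lin (rho x)) ->
  (forall x y, theta' x y - theta x y = d1 br rho f x y) ->
  shear (ext_br br rho theta p q)
  = ext_br br rho theta' (shear p) (shear q).
Proof.
move=> rho_lin dtheta; case: p q => [x v] [y w].
rewrite /shear /ext_br /= !(lin_add (rho_lin _)).
have -> : theta' x y = theta x y + d1 br rho f x y.
  by rewrite -dtheta addrC subrK.
congr (_, _); rewrite /d1 -[f _ - _ - _]addrA -opprD (addrACA (rho x w)).
rewrite (addrACA (rho x w + rho y v)).
by rewrite (addrCA (rho x (f y) + rho y (f x))) subrr addr0.
Qed.

End Shear.

Theorem lemma4p3 (K : fieldType) (J V : lmodType K)
  (br : J -> J -> J) (alpha : J -> J) (rho : J -> V -> V) (beta : V -> V)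
  (theta theta' : J -> J -> V) :
  HomJJ br alpha ->
  is_rep br alpha rho beta ->
  cocycle2 br alpha rho beta theta ->
  cocycle2 br alpha rho beta theta' ->
  coboundary2 br alpha rho beta (fun x y => theta' x y - theta x y) ->
  exists Phi : J * V -> J * V,
    [/\ HomJJ_iso (ext_br br rho theta) (ext_alpha alpha beta)
                  (ext_br br rho theta') (ext_alpha alpha beta) Phi,
        (forall v : V, Phi (i0 J v) = i0 J v) &
        (forall p : J * V, pi0 (Phi p) = pi0 p)].
Proof.
move=> _ [beta_lin rho_lin _ _ _] _ _ [f [f_lin f_alpha dtheta]].
exists (shear f); split=> [|v|//]; last exact: shear_i0.
split=> [||p|p q].
- exact: shear_lin.
- exact: shear_bij.
- exact: shear_ext_alpha.
- exact: shear_ext_br.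
Qed.
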